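(* For every integer $n \geq 3$, $$\Delta_n(FP/ES) = \frac{2^{n-2}}{n-1} \quad\text{and}\quad \Delta_n(ES/FP) = \frac{n-1}{2},$$ where $$\Delta_n(FP/ES) = \max_{T\in RB(n)}\ \max_{i\in[n]}\ \sup_{l>0} \frac{FP_T(i)}{ES_T(i)},\qquad \Delta_n(ES/FP) = \max_{T\in RB(n)}\ \max_{i\in[n]}\ \sup_{l>0} \frac{ES_T(i)}{FP_T(i)},$$ the suprema being taken over all assignments $l$ of strictly positive lengths to the edges of $T$. Moreover, both equalities remain true if the suprema are restricted to positive edge-length assignments satisfying the molecular clock condition (MC).
   Context: $[n]=\{1,\dots,n\}$. A rooted binary phylogenetic tree on $[n]$ is a rooted tree with root $\rho$ and leaf set $[n]$ in which every non-leaf vertex (including $\rho$) is unlabelled and has out-degree exactly 2. Two such trees are identified if there is a graph isomorphism between them that sends leaf $x$ to leaf $x$ for every $x$. $RB(n)$ denotes the (finite) set of all such trees. Each edge $e$ carries a length $l(e)>0$. For an edge $e$, $n(e)$ is the number of leaves descended from $e$ (that is, below its endpoint farther from the root). $P(T;\rho,i)$ is the path from $\rho$ to leaf $i$. The Fair Proportion index is $FP_T(i)=\sum_{e\in P(T;\rho,i)} l(e)/n(e)$. The Equal Splits index is $ES_T(i)=\sum_{e\in P(T;\rho,i)} l(e)/\Pi(e,i)$, where $\Pi(e,i)=1$ if $e$ is the pendant edge incident with $i$, and otherwise $\Pi(e,i)$ is the product of the out-degrees of the interior vertices on the directed path from the lower endpoint of $e$ to $i$. In a binary tree this equals $2^{k}$,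 where $k$ is the number of edges strictly between $e$ and $i$. Molecular clock condition (MC): the sum of the edge lengths on the path from $\rho$ to leaf $i$ is the same for every leaf $i$. *)

From Stdlib Require Import Reals Lra List Permutation Arith.
Import ListNotations.
Open Scope R_scope.

(* A rooted binary phylogenetic tree together with an edge-length assignment.
   [WNode l1 t1 l2 t2] is an interior vertex with two outgoing edges: the edge
   to the subtree [t1] has length [l1], the edge to [t2] has length [l2]. *)
Inductive wtree : Type :=
| WLeaf : nat -> wtree
| WNode : R -> wtree -> R -> wtree -> wtree.

Fixpoint leaves (t : wtree) : list nat :=
  match t with
  | WLeaf x => [x]
  | WNode _ t1 _ t2 => leaves t1 ++ leaves t2
  end.

(* T is (a representative of) an element of RB(n): the root is an interior
   vertex and the leaves are labelled bijectively by 1..n. *)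
Definition in_RB (n : nat) (t : wtree) : Prop :=
  (exists l1 t1 l2 t2, t = WNode l1 t1 l2 t2) /\
  Permutation (leaves t) (seq 1 n).

Fixpoint pos_lengths (t : wtree) : Prop :=
  match t with
  | WLeaf _ => True
  | WNode l1 t1 l2 t2 => 0 < l1 /\ 0 < l2 /\ pos_lengths t1 /\ pos_lengths t2
  end.

Fixpoint path_length (t : wtree) (i : nat) : R :=
  match t with
  | WLeaf _ => 0
  | WNode l1 t1 l2 t2 =>
      if in_dec Nat.eq_dec i (leaves t1) then l1 + path_length t1 i
      else if in_dec Nat.eq_dec i (leaves t2) then l2 + path_length t2 i
      else 0
  end.

Definition MC (t : wtree) : Prop :=
  forall i j, In i (leaves t) -> In j (leaves t) ->
    path_length t i = path_length t j.

Fixpoint depth (t : wtree) (i : nat) : nat :=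
  match t with
  | WLeaf _ => 0
  | WNode _ t1 _ t2 =>
      if in_dec Nat.eq_dec i (leaves t1) then S (depth t1 i)
      else if in_dec Nat.eq_dec i (leaves t2) then S (depth t2 i)
      else 0
  end.

(* Fair Proportion index: sum over path edges e of l(e)/n(e), where n(e) is
   the number of leaves below e (= leaves of the child subtree). *)
Fixpoint FP (t : wtree) (i : nat) : R :=
  match t with
  | WLeaf _ => 0
  | WNode l1 t1 l2 t2 =>
      if in_dec Nat.eq_dec i (leaves t1)
      then l1 / INR (length (leaves t1)) + FP t1 i
      else if in_dec Nat.eq_dec i (leaves t2)
      then l2 / INR (length (leaves t2)) + FP t2 i
      else 0
  end.

(* Equal Splits index: sum over path edges e of l(e)/Pi(e,i), where
   Pi(e,i) = 2^k, k = number of edges strictly between e and i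
   = depth of i in the child subtree below e. *)
Fixpoint ES (t : wtree) (i : nat) : R :=
  match t with
  | WLeaf _ => 0
  | WNode l1 t1 l2 t2 =>
      if in_dec Nat.eq_dec i (leaves t1)
      then l1 / 2 ^ depth t1 i + ES t1 i
      else if in_dec Nat.eq_dec i (leaves t2)
      then l2 / 2 ^ depth t2 i + ES t2 i
      else 0
  end.

Definition is_sup_ratio (n : nat) (P : wtree -> Prop)
    (f g : wtree -> nat -> R) (v : R) : Prop :=
  (forall t i, in_RB n t -> In i (seq 1 n) -> pos_lengths t -> P t ->
     f t i / g t i <= v) /\
  (forall c, c < v -> exists t i, in_RB n t /\ In i (seq 1 n) /\
     pos_lengths t /\ P t /\ c < f t i / g t i).

(* An edge e above a subtree with a leaves, in which i has depth d < a,
   contributes l(e)/a to FP(i) and l(e)/2^d to ES(i).  Below the root a <= n-1,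
   so 2^d/a <= 2^(a-1)/a <= 2^(n-2)/(n-1) and a/2^d <= (n-1)/2, and these
   termwise bounds give the upper bounds on the ratios.  They are approached by
   letting the length L of a root edge grow: above a caterpillar whose deepest
   leaf has depth n-2 for FP/ES, and above a subtree with n-1 leaves in which i
   has depth 1 for ES/FP.  The remaining edges can be chosen so that both trees
   are ultrametric, which gives the MC versions. *)

From Stdlib Require Import Reals Lra Lia List Permutation.
Open Scope R_scope.

Lemma Rdiv_le_of_le_mul x y C : 0 < y -> x <= C * y -> x / y <= C.
Proof.
  intros Hy H. apply (Rmult_le_reg_r y); auto.
  unfold Rdiv. rewrite Rmult_assoc, Rinv_l by lra. lra.
Qed.

Lemma Rlt_div_of_mul_lt c x y : 0 < y -> c * y < x -> c < x / y.
Proof.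
  intros Hy H. apply (Rmult_lt_reg_r y); auto.
  unfold Rdiv. rewrite Rmult_assoc, Rinv_l by lra. lra.
Qed.

Lemma leaves_length_pos s : (1 <= length (leaves s))%nat.
Proof. induction s; simpl; [lia|]. rewrite length_app. lia. Qed.

Lemma depth_lt_leaves_length s i :
  In i (leaves s) -> (depth s i < length (leaves s))%nat.
Proof.
  induction s as [x|l1 t1 IH1 l2 t2 IH2]; simpl; intros Hi; [lia|].
  rewrite length_app.
  pose proof (leaves_length_pos t1); pose proof (leaves_length_pos t2).
  destruct (in_dec Nat.eq_dec i (leaves t1)) as [h1|h1]; [specialize (IH1 h1); lia|].
  destruct (in_dec Nat.eq_dec i (leaves t2)) as [h2|h2]; [specialize (IH2 h2); lia|].
  apply in_app_or in Hi; tauto.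
Qed.

Fixpoint edge_sum (w : wtree -> nat -> R) (t : wtree) (i : nat) : R :=
  match t with
  | WLeaf _ => 0
  | WNode l1 t1 l2 t2 =>
      if in_dec Nat.eq_dec i (leaves t1) then l1 / w t1 i + edge_sum w t1 i
      else if in_dec Nat.eq_dec i (leaves t2) then l2 / w t2 i + edge_sum w t2 i
      else 0
  end.

Definition leaf_count (s : wtree) (_ : nat) : R := INR (length (leaves s)).

Definition split_weight (s : wtree) (i : nat) : R := 2 ^ depth s i.

Lemma FP_edge_sum t i : FP t i = edge_sum leaf_count t i.
Proof. induction t as [x|l1 t1 IH1 l2 t2 IH2]; simpl; [reflexivity|]. now rewrite IH1, IH2. Qed.

Lemma ES_edge_sum t i : ES t i = edge_sum split_weight t i.
Proof. induction t as [x|l1 t1 IH1 l2 t2 IH2]; simpl; [reflexivity|]. now rewrite IH1, IH2. Qed.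

Lemma leaf_count_pos s i : 0 < leaf_count s i.
Proof. apply lt_0_INR. pose proof (leaves_length_pos s). lia. Qed.

Lemma split_weight_pos s i : 0 < split_weight s i.
Proof. apply pow_lt. lra. Qed.

Lemma edge_sum_node_l w l1 t1 l2 t2 i : In i (leaves t1) ->
  edge_sum w (WNode l1 t1 l2 t2) i = l1 / w t1 i + edge_sum w t1 i.
Proof. intros Hi. simpl. now destruct (in_dec Nat.eq_dec i (leaves t1)). Qed.

Section EdgeSum.

Variable w : wtree -> nat -> R.
Hypothesis w_pos : forall s i, 0 < w s i.

Lemma edge_sum_nonneg t i : pos_lengths t -> 0 <= edge_sum w t i.
Proof.
  induction t as [x|l1 t1 IH1 l2 t2 IH2]; simpl; intros Hp; [lra|].
  destruct Hp as (H1 & H2 & H3 & H4).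
  pose proof (w_pos t1 i); pose proof (w_pos t2 i).
  destruct (in_dec Nat.eq_dec i (leaves t1)).
  - specialize (IH1 H3). assert (0 < l1 / w t1 i) by (apply Rdiv_lt_0_compat; lra). lra.
  - destruct (in_dec Nat.eq_dec i (leaves t2)); [|lra].
    specialize (IH2 H4). assert (0 < l2 / w t2 i) by (apply Rdiv_lt_0_compat; lra). lra.
Qed.

Lemma edge_sum_node_pos l1 t1 l2 t2 i :
  pos_lengths (WNode l1 t1 l2 t2) -> In i (leaves (WNode l1 t1 l2 t2)) ->
  0 < edge_sum w (WNode l1 t1 l2 t2) i.
Proof.
  simpl. intros (H1 & H2 & H3 & H4) Hi.
  pose proof (w_pos t1 i); pose proof (w_pos t2 i).
  destruct (in_dec Nat.eq_dec i (leaves t1)).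
  - pose proof (edge_sum_nonneg t1 i H3).
    assert (0 < l1 / w t1 i) by (apply Rdiv_lt_0_compat; lra). lra.
  - destruct (in_dec Nat.eq_dec i (leaves t2)); [|apply in_app_or in Hi; tauto].
    pose proof (edge_sum_nonneg t2 i H4).
    assert (0 < l2 / w t2 i) by (apply Rdiv_lt_0_compat; lra). lra.
Qed.

End EdgeSum.

Section Domination.

Variables w1 w2 : wtree -> nat -> R.
Hypothesis w1_pos : forall s i, 0 < w1 s i.
Hypothesis w2_pos : forall s i, 0 < w2 s i.
Variables (N : nat) (C : R) (i : nat).
Hypothesis w2_le_w1 : forall s, In i (leaves s) -> (length (leaves s) <= N)%nat ->
  w2 s i <= C * w1 s i.

Lemma edge_term_le s l : In i (leaves s) -> (length (leaves s) <= N)%nat -> 0 <= l ->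
  l / w1 s i <= C * (l / w2 s i).
Proof.
  intros Hi Hlen Hl. pose proof (w2_le_w1 s Hi Hlen).
  pose proof (w1_pos s i); pose proof (w2_pos s i).
  replace (l / w1 s i) with (l * w2 s i / (w1 s i * w2 s i)) by (field; lra).
  replace (C * (l / w2 s i)) with (l * (C * w1 s i) / (w1 s i * w2 s i)) by (field; lra).
  unfold Rdiv. apply Rmult_le_compat_r.
  - left. apply Rinv_0_lt_compat, Rmult_lt_0_compat; lra.
  - now apply Rmult_le_compat_l.
Qed.

(* Both children of a tree with at most N+1 leaves have at most N leaves. *)
Lemma edge_sum_le_scaled t : pos_lengths t -> (length (leaves t) <= S N)%nat ->
  edge_sum w1 t i <= C * edge_sum w2 t i.
Proof.
  induction t as [x|l1 t1 IH1 l2 t2 IH2]; simpl; intros Hp Hlen; [lra|].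
  destruct Hp as (H1 & H2 & H3 & H4). rewrite length_app in Hlen.
  pose proof (leaves_length_pos t1); pose proof (leaves_length_pos t2).
  destruct (in_dec Nat.eq_dec i (leaves t1)) as [h1|h1].
  - pose proof (edge_term_le t1 l1 h1 ltac:(lia) ltac:(lra)).
    specialize (IH1 H3 ltac:(lia)). lra.
  - destruct (in_dec Nat.eq_dec i (leaves t2)) as [h2|h2]; [|lra].
    pose proof (edge_term_le t2 l2 h2 ltac:(lia) ltac:(lra)).
    specialize (IH2 H4 ltac:(lia)). lra.
Qed.

End Domination.

Lemma ratio_le_of_dominated n w1 w2 C t i :
  (forall s j, 0 < w1 s j) -> (forall s j, 0 < w2 s j) ->
  (forall s, In i (leaves s) -> (length (leaves s) <= n - 1)%nat -> w2 s i <= C * w1 s i) ->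
  in_RB n t -> In i (seq 1 n) -> pos_lengths t ->
  edge_sum w1 t i / edge_sum w2 t i <= C.
Proof.
  intros Hw1 Hw2 Hdom [[l1 [t1 [l2 [t2 ->]]]] Hperm] Hi Hp.
  assert (Hin : In i (leaves (WNode l1 t1 l2 t2)))
    by (apply (Permutation_in _ (Permutation_sym Hperm)); auto).
  pose proof (Permutation_length Hperm) as Hlen. rewrite length_seq in Hlen.
  pose proof (leaves_length_pos (WNode l1 t1 l2 t2)).
  apply Rdiv_le_of_le_mul; [now apply edge_sum_node_pos|].
  apply (edge_sum_le_scaled w1 w2 Hw1 Hw2 (n - 1)); auto; lia.
Qed.

Lemma pow2_div_succ_mono a b : (a <= b)%nat -> 2 ^ a * INR (S b) <= 2 ^ b * INR (S a).
Proof.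
  induction 1 as [|m _ IH]; [lra|].
  pose proof (pow_lt 2 a ltac:(lra)). pose proof (pos_INR m).
  rewrite !S_INR in *. simpl (2 ^ S m). nra.
Qed.

Lemma split_weight_le N s i : In i (leaves s) -> (length (leaves s) <= N)%nat ->
  split_weight s i <= 2 ^ (N - 1) / INR N * leaf_count s i.
Proof.
  intros Hi Hlen. unfold split_weight, leaf_count.
  pose proof (depth_lt_leaves_length s i Hi) as Hd.
  destruct (length (leaves s)) as [|a]; [lia|].
  destruct N as [|N]; [lia|]. replace (S N - 1)%nat with N by lia.
  pose proof (Rle_pow 2 (depth s i) a ltac:(lra) ltac:(lia)).
  pose proof (pow2_div_succ_mono a N ltac:(lia)).
  assert (HN : 0 < INR (S N)) by (apply lt_0_INR; lia).
  replace (2 ^ N / INR (S N) * INR (S a)) with (2 ^ N * INR (S a) / INR (S N))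
    by (field; lra).
  apply (Rmult_le_reg_r (INR (S N))); auto.
  unfold Rdiv. rewrite Rmult_assoc, Rinv_l, Rmult_1_r by lra.
  pose proof (pos_INR (S N)). nra.
Qed.

Lemma leaf_count_le N s i : (2 <= N)%nat -> In i (leaves s) ->
  (length (leaves s) <= N)%nat -> leaf_count s i <= INR N / 2 * split_weight s i.
Proof.
  intros HN Hi Hlen. unfold leaf_count, split_weight.
  apply le_INR in HN, Hlen. simpl in HN.
  destruct s as [x|l1 t1 l2 t2]; [simpl in *; lra|].
  assert (Hd : (1 <= depth (WNode l1 t1 l2 t2) i)%nat).
  { simpl. simpl in Hi. destruct (in_dec Nat.eq_dec i (leaves t1)); [lia|].
    destruct (in_dec Nat.eq_dec i (leaves t2)); [lia|]. apply in_app_or in Hi; tauto. }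
  pose proof (Rle_pow 2 1 _ ltac:(lra) Hd). simpl (2 ^ 1) in *. nra.
Qed.

Lemma FP_ES_ratio_le n t i : in_RB n t -> In i (seq 1 n) -> pos_lengths t ->
  FP t i / ES t i <= 2 ^ (n - 2) / INR (n - 1).
Proof.
  intros. rewrite FP_edge_sum, ES_edge_sum.
  apply (ratio_le_of_dominated n); auto using leaf_count_pos, split_weight_pos.
  intros s Hs Hlen. replace (n - 2)%nat with (n - 1 - 1)%nat by lia.
  now apply split_weight_le.
Qed.

Lemma ES_FP_ratio_le n t i : (3 <= n)%nat -> in_RB n t -> In i (seq 1 n) ->
  pos_lengths t -> ES t i / FP t i <= INR (n - 1) / 2.
Proof.
  intros. rewrite FP_edge_sum, ES_edge_sum.
  apply (ratio_le_of_dominated n); auto using leaf_count_pos, split_weight_pos.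
  intros s Hs Hlen. apply leaf_count_le; auto; lia.
Qed.

(* (L/P + r)/(L/Q + a) tends to Q/P as L grows. *)
Lemma exists_affine_ratio_gt P Q r a c : 0 < P -> 0 < Q -> 0 <= r -> 0 <= a ->
  c < Q / P -> exists L, 0 < L /\ c < (L / P + r) / (L / Q + a).
Proof.
  intros HP HQ Hr Ha Hc.
  assert (Hd : 0 < Q - c * P).
  { apply (Rmult_lt_compat_r P) in Hc; auto.
    replace (Q / P * P) with Q in Hc by (field; lra). lra. }
  set (L := (Rabs c * a * P * Q + 1) / (Q - c * P)).
  assert (HL : L * (Q - c * P) = Rabs c * a * P * Q + 1) by (unfold L; field; lra).
  assert (HL0 : 0 < L).
  { unfold L. apply Rdiv_lt_0_compat; auto.
    pose proof (Rabs_pos c). assert (0 <= Rabs c * a * P * Q) by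
      (repeat apply Rmult_le_pos; lra). lra. }
  exists L. split; auto.
  assert (0 < L / Q) by (apply Rdiv_lt_0_compat; lra).
  apply Rlt_div_of_mul_lt; [lra|].
  assert (Hdiff : L / P + r - c * (L / Q + a)
                  = (L * (Q - c * P) + r * P * Q - c * a * P * Q) / (P * Q))
    by (field; lra).
  assert (Hnum : 0 < L * (Q - c * P) + r * P * Q - c * a * P * Q).
  { rewrite HL.
    assert (c * (a * P * Q) <= Rabs c * (a * P * Q)).
    { apply Rmult_le_compat_r; [repeat apply Rmult_le_pos; lra|apply Rle_abs]. }
    assert (0 <= r * P * Q) by (repeat apply Rmult_le_pos; lra). nra. }
  assert (0 < (L * (Q - c * P) + r * P * Q - c * a * P * Q) / (P * Q))
    by (apply Rdiv_lt_0_compat; nra).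
  lra.
Qed.

Definition const_height (t : wtree) (h : R) : Prop :=
  forall j, In j (leaves t) -> path_length t j = h.

Lemma const_height_leaf x : const_height (WLeaf x) 0.
Proof. intros j _. reflexivity. Qed.

Lemma const_height_node l1 t1 l2 t2 h1 h2 :
  const_height t1 h1 -> const_height t2 h2 -> l1 + h1 = l2 + h2 ->
  const_height (WNode l1 t1 l2 t2) (l1 + h1).
Proof.
  intros H1 H2 E j Hj. simpl in *.
  destruct (in_dec Nat.eq_dec j (leaves t1)) as [h|h]; [now rewrite H1|].
  destruct (in_dec Nat.eq_dec j (leaves t2)) as [h'|h']; [rewrite H2; auto|].
  apply in_app_or in Hj; tauto.
Qed.

Lemma MC_of_const_height t h : const_height t h -> MC t.
Proof. intros H i j Hi Hj. now rewrite (H i Hi), (H j Hj). Qed.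

(* Leaf 2 is at depth k; the pendant edges are lengthened so that every leaf
   is at distance k from the root. *)
Fixpoint caterpillar (k : nat) : wtree :=
  match k with
  | O => WLeaf 2
  | S k' => WNode 1 (caterpillar k') (INR k) (WLeaf (k' + 3))
  end.

Lemma leaves_caterpillar k : leaves (caterpillar k) = seq 2 (S k).
Proof.
  induction k as [|k IH]; [reflexivity|].
  simpl caterpillar. simpl leaves. rewrite IH, (seq_S (S k)).
  now replace (k + 3)%nat with (2 + S k)%nat by lia.
Qed.

Lemma In_2_caterpillar k : In 2%nat (leaves (caterpillar k)).
Proof. rewrite leaves_caterpillar. now left. Qed.

Lemma pos_lengths_caterpillar k : pos_lengths (caterpillar k).
Proof.
  induction k as [|k IH]; cbn [caterpillar pos_lengths]; auto.
  repeat split; auto; try lra. apply lt_0_INR; lia.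
Qed.

Lemma const_height_caterpillar k : const_height (caterpillar k) (INR k).
Proof.
  induction k as [|k IH]; [apply const_height_leaf|].
  replace (INR (S k)) with (1 + INR k) by (rewrite S_INR; lra).
  apply const_height_node with 0; auto using const_height_leaf. rewrite S_INR. lra.
Qed.

Lemma depth_caterpillar k : depth (caterpillar k) 2 = k.
Proof.
  induction k as [|k IH]; [reflexivity|].
  simpl. destruct (in_dec Nat.eq_dec 2%nat (leaves (caterpillar k))) as [h|h].
  - now rewrite IH.
  - now destruct (h (In_2_caterpillar k)).
Qed.

Definition fp_witness (k : nat) (L : R) : wtree :=
  WNode L (caterpillar k) (L + INR k) (WLeaf 1).

Definition es_witness (m : nat) (L : R) : wtree :=
  WNode L (WNode (INR m + 1) (WLeaf 1) 1 (caterpillar m)) (L + (INR m + 1)) (WLeaf (m + 3)).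

Lemma in_RB_fp_witness k L : in_RB (S (S k)) (fp_witness k L).
Proof.
  split; [unfold fp_witness; eauto|].
  simpl leaves. rewrite leaves_caterpillar.
  apply Permutation_sym, Permutation_cons_append.
Qed.

Lemma in_RB_es_witness m L : in_RB (S (S (S m))) (es_witness m L).
Proof.
  split; [unfold es_witness; eauto|].
  simpl leaves. rewrite leaves_caterpillar, (seq_S (S (S m))).
  replace (1 + S (S m))%nat with (m + 3)%nat by lia. apply Permutation_refl.
Qed.

Lemma MC_fp_witness k L : MC (fp_witness k L).
Proof.
  apply MC_of_const_height with (L + INR k).
  apply const_height_node with 0;
    auto using const_height_caterpillar, const_height_leaf; lra.
Qed.

Lemma MC_es_witness m L : MC (es_witness m L).
Proof.
  apply MC_of_const_height with (L + (INR m + 1 + 0)).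
  apply const_height_node with 0; [|apply const_height_leaf|lra].
  apply const_height_node with (INR m);
    auto using const_height_caterpillar, const_height_leaf; lra.
Qed.

Lemma FP_ES_ratio_approx n c : (2 <= n)%nat -> c < 2 ^ (n - 2) / INR (n - 1) ->
  exists t i, in_RB n t /\ In i (seq 1 n) /\ pos_lengths t /\ MC t /\
    c < FP t i / ES t i.
Proof.
  intros Hn Hc. destruct n as [|[|k]]; [lia|lia|].
  replace (S (S k) - 2)%nat with k in Hc by lia.
  replace (S (S k) - 1)%nat with (S k) in Hc by lia.
  assert (HP : 0 < INR (S k)) by (apply lt_0_INR; lia).
  assert (HQ : 0 < 2 ^ k) by (apply pow_lt; lra).
  pose proof (pos_lengths_caterpillar k) as Hcat.
  destruct (exists_affine_ratio_gt (INR (S k)) (2 ^ k)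
              (FP (caterpillar k) 2) (ES (caterpillar k) 2) c HP HQ)
    as [L [HL Hlt]]; auto.
  { rewrite FP_edge_sum. apply edge_sum_nonneg; auto using leaf_count_pos. }
  { rewrite ES_edge_sum. apply edge_sum_nonneg; auto using split_weight_pos. }
  exists (fp_witness k L), 2%nat.
  split; [apply in_RB_fp_witness|]. split; [simpl; auto|].
  split; [simpl; pose proof (pos_INR k); repeat split; auto; lra|].
  split; [apply MC_fp_witness|].
  unfold fp_witness. rewrite FP_edge_sum, ES_edge_sum, !edge_sum_node_l
    by apply In_2_caterpillar.
  rewrite <- FP_edge_sum, <- ES_edge_sum.
  unfold leaf_count, split_weight.
  now rewrite depth_caterpillar, leaves_caterpillar, length_seq.
Qed.

Lemma ES_FP_ratio_approx n c : (3 <= n)%nat -> c < INR (n - 1) / 2 ->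
  exists t i, in_RB n t /\ In i (seq 1 n) /\ pos_lengths t /\ MC t /\
    c < ES t i / FP t i.
Proof.
  intros Hn Hc. destruct n as [|[|[|m]]]; [lia|lia|lia|].
  replace (S (S (S m)) - 1)%nat with (S (S m)) in Hc by lia.
  set (s := WNode (INR m + 1) (WLeaf 1) 1 (caterpillar m)).
  pose proof (pos_INR m).
  assert (Hs : pos_lengths s).
  { unfold s; simpl. repeat split; auto using pos_lengths_caterpillar; lra. }
  assert (HQ : 0 < INR (S (S m))) by (apply lt_0_INR; lia).
  destruct (exists_affine_ratio_gt 2 (INR (S (S m))) (ES s 1) (FP s 1) c
              ltac:(lra) HQ) as [L [HL Hlt]]; auto.
  { rewrite ES_edge_sum. apply edge_sum_nonneg; auto using split_weight_pos. }
  { rewrite FP_edge_sum. apply edge_sum_nonneg; auto using leaf_count_pos. }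
  assert (H1 : In 1%nat (leaves s)) by (simpl; auto).
  exists (es_witness m L), 1%nat.
  split; [apply in_RB_es_witness|]. split; [simpl; auto|].
  split; [refine (conj HL (conj _ (conj Hs I))); lra|].
  split; [apply MC_es_witness|].
  unfold es_witness. fold s.
  rewrite FP_edge_sum, ES_edge_sum, !edge_sum_node_l by exact H1.
  rewrite <- FP_edge_sum, <- ES_edge_sum.
  unfold leaf_count, split_weight.
  replace (length (leaves s)) with (S (S m))
    by (unfold s; simpl; now rewrite leaves_caterpillar, length_seq).
  replace (2 ^ depth s 1) with 2 by (simpl; lra).
  exact Hlt.
Qed.

Lemma is_sup_ratio_of_bounds n P f g v :
  (forall t, MC t -> P t) ->
  (forall t i, in_RB n t -> In i (seq 1 n) -> pos_lengths t -> f t i / g t i <= v) ->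
  (forall c, c < v -> exists t i, in_RB n t /\ In i (seq 1 n) /\ pos_lengths t /\
     MC t /\ c < f t i / g t i) ->
  is_sup_ratio n P f g v.
Proof.
  intros HP Hub Hlb. split; [intros; auto|].
  intros c Hc. destruct (Hlb c Hc) as (t & i & ? & ? & ? & ? & ?).
  exists t, i. split; [|split; [|split; [|split]]]; auto.
Qed.

Lemma FP_ES_is_sup n P : (2 <= n)%nat -> (forall t, MC t -> P t) ->
  is_sup_ratio n P FP ES (2 ^ (n - 2) / INR (n - 1)).
Proof.
  intros Hn HP. apply is_sup_ratio_of_bounds; auto.
  - apply FP_ES_ratio_le.
  - intros c. now apply FP_ES_ratio_approx.
Qed.

Lemma ES_FP_is_sup n P : (3 <= n)%nat -> (forall t, MC t -> P t) ->
  is_sup_ratio n P ES FP (INR (n - 1) / 2).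
Proof.
  intros Hn HP. apply is_sup_ratio_of_bounds; auto.
  - intros t i. now apply ES_FP_ratio_le.
  - intros c. now apply ES_FP_ratio_approx.
Qed.

Theorem theorem1 (n : nat) (hn : (3 <= n)%nat) :
  is_sup_ratio n (fun _ => True) FP ES (2 ^ (n - 2) / INR (n - 1)) /\
  is_sup_ratio n (fun _ => True) ES FP (INR (n - 1) / 2) /\
  is_sup_ratio n MC FP ES (2 ^ (n - 2) / INR (n - 1)) /\
  is_sup_ratio n MC ES FP (INR (n - 1) / 2).
Proof.
  split; [|split; [|split]].
  - apply FP_ES_is_sup; auto with arith.
  - now apply ES_FP_is_sup.
  - apply FP_ES_is_sup; auto with arith.
  - now apply ES_FP_is_sup.
Qed.
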